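(* Let $X \subset Y \subset \mathbb{R}^{n}$ be finite sets, with $X$ having at least $k+1$ points. Define $i_{\ast}: \operatorname{Br}_{k}(X) \to \operatorname{Br}_{k}(Y)$ by sending a branch point $(s,[x])$ of $\Gamma_k(X)$ to the maximal branch point of $\Gamma_{k}(Y)$ below $(s,[x])$, where $x$ is regarded as a vertex of $L_{s,k}(Y)$. Then $i_*$ is order-preserving, and for all branch points $a,b$ of $\Gamma_{k}(X)$, \[ i_{\ast}(a) \cup i_{\ast}(b) \leq i_{\ast}(a \cup b), \] where the join on the left is taken in $\Gamma_{k}(Y)$ and the join $a \cup b$ on the right in $\Gamma_{k}(X)$.
   Context: $\mathbb{R}^n$ has Euclidean metric $d$. For $s\ge 0$, $V_s(X)$ is the Vietoris–Rips complex (vertex set $X$, simplices nonempty subsets with pairwise distances $\le s$), and for an integer $k\ge 0$, $L_{s,k}(X)$ is the full subcomplex of $V_s(X)$ on the vertices $x$ having at least $k$ points $x'\ne x$ of $X$ with $d(x,x')\le s$; for $X \subset Y$, $L_{s,k}(X) \subset L_{s,k}(Y)$. $\Gamma_{k}(X)$ is the poset whose elements are pairs $(s,[x])$ with $s \in \mathbb{R}_{\geq 0}$ and $[x] \in \pi_{0}L_{s,k}(X)$, with $(s,[x]) \leq (t,[y])$ iff $s \leq t$ and the function $\pi_{0}L_{s,k}(X) \to \pi_{0}L_{t,k}(X)$ induced by inclusion sends $[x]$ to $[y]$. $\cup$ denotes least upper bound (join), which exists for any two elements. An element $(t,[x])$ is a branch point if either (1) there is $s_{0} < t$ such that for all $s$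 with $s_{0} \leq s < t$ there are two distinct elements $(s,[x_{0}]) \neq (s,[x_{1}])$ both $\leq (t,[x])$; or (2) there is no element $(s,[y])$ with $s<t$ and $(s,[y]) \leq (t,[x])$. $\operatorname{Br}_{k}(X)$ is the poset of branch points. Every element $p$ has a unique maximal branch point below it: a branch point $b \le p$ with $b' \le b$ for all branch points $b' \le p$. *)

From Stdlib Require Import Reals List Relations ClassicalEpsilon.
Import ListNotations.
Open Scope R_scope.

(* Points of R^n are lists of reals of length n; a subset of R^n is a
   predicate on lists all of whose members have length n. *)

Definition dist (x y : list R) : R :=
  sqrt (fold_right Rplus 0 (map (fun p => (fst p - snd p) ^ 2) (combine x y))).

Definition finite_set (X : list R -> Prop) : Prop :=
  exists l : list (list R), forall x, X x <-> In x l.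

Definition at_least (m : nat) (X : list R -> Prop) : Prop :=
  exists l : list (list R), NoDup l /\ length l = m /\ forall x, In x l -> X x.

(* vertex x of L_{s,k}(X): x in X with at least k points x' <> x of X,
   d(x,x') <= s *)
Definition vert (X : list R -> Prop) (s : R) (k : nat) (x : list R) : Prop :=
  X x /\ exists l : list (list R), NoDup l /\ length l = k /\
    forall y, In y l -> X y /\ y <> x /\ dist x y <= s.

Definition edge (X : list R -> Prop) (s : R) (k : nat) : relation (list R) :=
  fun x y => vert X s k x /\ vert X s k y /\ dist x y <= s.

(* x and y are vertices in the same connected component of L_{s,k}(X)
   (pi_0 of a simplicial complex = edge-path components) *)
Definition conn (X : list R -> Prop) (s : R) (k : nat) (x y : list R) : Prop :=
  vert X s k x /\ clos_refl_trans _ (edge X s k) x y.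

(* Representatives (s, x) of elements (s,[x]) of Gamma_k(X) *)
Record GElt := mkG { gs : R; gx : list R }.

Definition validG (X : list R -> Prop) (k : nat) (p : GElt) : Prop :=
  0 <= gs p /\ vert X (gs p) k (gx p).

Definition leG (X : list R -> Prop) (k : nat) (p q : GElt) : Prop :=
  validG X k p /\ validG X k q /\ gs p <= gs q /\ conn X (gs q) k (gx p) (gx q).

Definition eqG (X : list R -> Prop) (k : nat) (p q : GElt) : Prop :=
  leG X k p q /\ leG X k q p.

Definition isBranch (X : list R -> Prop) (k : nat) (q : GElt) : Prop :=
  validG X k q /\
  ((exists s0, s0 < gs q /\
      forall s, s0 <= s < gs q ->
        exists x0 x1, leG X k (mkG s x0) q /\ leG X k (mkG s x1) q /\
                      ~ eqG X k (mkG s x0) (mkG s x1))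
   \/ ~ (exists p, gs p < gs q /\ leG X k p q)).

Definition isJoin (X : list R -> Prop) (k : nat) (a b j : GElt) : Prop :=
  leG X k a j /\ leG X k b j /\
  forall u, leG X k a u -> leG X k b u -> leG X k j u.

Definition maxBrBelow (Y : list R -> Prop) (k : nat) (p b : GElt) : Prop :=
  isBranch Y k b /\ leG Y k b p /\
  forall b', isBranch Y k b' -> leG Y k b' p -> leG Y k b' b.

Definition GElt_inhabited : inhabited GElt := inhabits (mkG 0 nil).

Definition istar (Y : list R -> Prop) (k : nat) (a : GElt) : GElt :=
  epsilon GElt_inhabited (maxBrBelow Y k a).

(* The two claims about i_* both follow from one existence result: for a
   finite Y, every element p of Gamma_k(Y) has a maximal branch point below
   it, so istar Y k p is that point.  Given this, i_* is monotone because a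
   branch point below p is below every p' >= p, and the join inequality
   follows since i_*(a), i_*(b) <= i_*(a \cup b) by monotonicity.

   Existence is proved by induction on the number of "critical values"
   (0 and the pairwise distances in Y) below the level of p.  Between two
   consecutive critical values the complexes L_{s,k}(Y) do not change, so
   (i) no branch point lives strictly inside such a gap, and (ii) p = (t,[y])
   may be lowered to the largest critical value d <= t without losing branch
   points below it.  If (d,[y]) is not itself a branch point, then at the
   next critical value d' < d there is a single component below it, and the
   maximal branch point below that component (induction) is the answer. *)

From Pilot Require Import Defs.
From Stdlib Require Import Reals List Lra Lia Relations Classical ClassicalEpsilon Wf_nat.
Open Scope R_scope.

Lemma dist_sym x y : Defs.dist x y = Defs.dist y x.
Proof.
  unfold Defs.dist. f_equal. revert y.
  induction x as [|a x IH]; intros [|b y]; simpl; try reflexivity.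
  rewrite IH. f_equal. ring.
Qed.

Lemma rt_mono {A} (R1 R2 : relation A) : (forall x y, R1 x y -> R2 x y) ->
  forall x y, clos_refl_trans _ R1 x y -> clos_refl_trans _ R2 x y.
Proof.
  intros H x y Hr; induction Hr;
    [apply rt_step; auto | apply rt_refl | eapply rt_trans; eauto].
Qed.

(* [gap Y a b]: no distance between points of Y lies in (a, b]; then
   L_{a,k}(Y) and L_{b,k}(Y) contain each other's simplices.  The case
   b <= a is ordinary monotonicity in the scale. *)
Definition gap (Y : list R -> Prop) (a b : R) : Prop :=
  forall x y, Y x -> Y y -> Defs.dist x y <= b -> Defs.dist x y <= a.

Lemma gap_le Y a b : b <= a -> gap Y a b.
Proof. intros H x y _ _ H'; lra. Qed.

Lemma vert_gap Y k a b x : gap Y a b -> vert Y b k x -> vert Y a k x.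
Proof.
  intros Hg [Hx [l [Hn [Hl Hi]]]]. split; auto. exists l. split; [auto|split; [auto|]].
  intros z Hz. destruct (Hi z Hz) as [HYz [Hne Hd]]. repeat split; auto.
Qed.

Lemma conn_gap Y k a b x y : gap Y a b -> conn Y b k x y -> conn Y a k x y.
Proof.
  intros Hg [Hx Hr]. split; [eapply vert_gap; eauto|].
  eapply rt_mono; [|exact Hr]. intros u v [Hu [Hv Hd]].
  split; [|split]; [eapply vert_gap; eauto | eapply vert_gap; eauto |].
  apply Hg; auto; [apply Hu|apply Hv].
Qed.

Lemma vert_sub (X Y : list R -> Prop) s k x :
  (forall x, X x -> Y x) -> vert X s k x -> vert Y s k x.
Proof.
  intros HXY [Hx [l [Hn [Hl Hi]]]]. split; auto. exists l. split; [auto|split; [auto|]].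
  intros z Hz. destruct (Hi z Hz) as [HXz [Hne Hd]]. auto.
Qed.

Lemma conn_sub (X Y : list R -> Prop) s k x y :
  (forall x, X x -> Y x) -> conn X s k x y -> conn Y s k x y.
Proof.
  intros HXY [Hx Hr]. split; [eapply vert_sub; eauto|].
  eapply rt_mono; [|exact Hr]. intros u v [Hu [Hv Hd]].
  split; [|split]; auto; eapply vert_sub; eauto.
Qed.

Lemma conn_refl Y s k x : vert Y s k x -> conn Y s k x x.
Proof. intros; split; auto. apply rt_refl. Qed.

Lemma conn_trans Y s k x y z : conn Y s k x y -> conn Y s k y z -> conn Y s k x z.
Proof. intros [Hx Hxy] [_ Hyz]. split; auto. eapply rt_trans; eauto. Qed.

Lemma conn_sym Y s k x y : conn Y s k x y -> conn Y s k y x.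
Proof.
  intros [Hx Hxy]. split.
  - revert Hx. induction Hxy; auto. intros _; apply H.
  - clear Hx. induction Hxy.
    + apply rt_step. destruct H as [Hx' [Hy Hd]]. split; [|split]; auto.
      rewrite dist_sym; auto.
    + apply rt_refl.
    + eapply rt_trans; eauto.
Qed.

Lemma leG_intro Y k p q :
  0 <= gs p <= gs q -> vert Y (gs p) k (gx p) -> conn Y (gs q) k (gx p) (gx q) ->
  leG Y k p q.
Proof.
  intros [Hp0 Hpq] Hp C. split; [split; auto|split; [split; [lra|]|split; auto]].
  apply conn_sym in C. apply C.
Qed.

Lemma leG_trans Y k p q r : leG Y k p q -> leG Y k q r -> leG Y k p r.
Proof.
  intros [[Hp0 Hp] [_ [Hpq Cpq]]] [_ [_ [Hqr Cqr]]].
  apply leG_intro; [split; lra | exact Hp |].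
  eapply conn_trans; [|exact Cqr]. eapply conn_gap; [apply gap_le, Hqr|exact Cpq].
Qed.

Lemma leG_sub (X Y : list R -> Prop) k p q :
  (forall x, X x -> Y x) -> leG X k p q -> leG Y k p q.
Proof.
  intros HXY [[Hp0 Hp] [_ [Hpq C]]].
  apply leG_intro; [split; lra | eapply vert_sub | eapply conn_sub]; eauto.
Qed.

Lemma eqG_branch Y k p q : eqG Y k p q -> isBranch Y k p -> isBranch Y k q.
Proof.
  intros [Hpq Hqp] [Hv H].
  assert (Hs : gs p = gs q) by (destruct Hpq as [_ [_ [? _]]]; destruct Hqp as [_ [_ [? _]]]; lra).
  split; [apply Hpq|].
  destruct H as [[s0 [Hs0 H]] | H].
  - left. exists s0. split; [lra|]. intros s Hs'.
    destruct (H s ltac:(lra)) as [x0 [x1 [H0 [H1 H2]]]].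
    exists x0, x1. split; [|split]; [eapply leG_trans; eauto | eapply leG_trans; eauto | exact H2].
  - right. intros [p' [Hlt Hle]]. apply H. exists p'. split; [lra|]. eapply leG_trans; eauto.
Qed.

Lemma level_zero_branch Y k q : validG Y k q -> gs q <= 0 -> isBranch Y k q.
Proof.
  intros Hq H0. split; auto. right. intros [p [Hlt [[Hp0 _] _]]]. lra.
Qed.

(* (i) A branch point cannot lie strictly above a gap (d, gs b]: the elements
   at any level in that gap below b are as few as at level gs b. *)
Lemma no_branch_in_gap Y k b d :
  isBranch Y k b -> 0 <= d -> d < gs b -> gap Y d (gs b) -> False.
Proof.
  intros [[Hb0 Hbv] H] Hd0 Hlt Hg.
  destruct H as [[s0 [Hs0 H]] | H].
  - set (s := Rmax s0 d).
    assert (Hs : s0 <= s < gs b /\ d <= s) by (unfold s, Rmax; destruct (Rle_dec s0 d); lra).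
    destruct (H s (proj1 Hs)) as [x0 [x1 [[V0 [_ [_ C0]]] [[V1 [_ [_ C1]]] Hne]]]].
    simpl in *. apply Hne.
    assert (Hgs : gap Y s (gs b)) by (intros u v Hu Hv Hd; specialize (Hg u v Hu Hv Hd); lra).
    assert (C01 : conn Y (gs b) k x0 x1) by (eapply conn_trans; [exact C0 | apply conn_sym, C1]).
    split; apply leG_intro; simpl.
    + split; lra.
    + apply V0.
    + eapply conn_gap; eauto.
    + split; lra.
    + apply V1.
    + eapply conn_gap; [exact Hgs | apply conn_sym, C01].
  - apply H. exists (mkG d (gx b)). split; simpl; [lra|].
    apply leG_intro; simpl; [split; lra | eapply vert_gap; eauto | apply conn_refl; auto].
Qed.

Lemma branch_below_gap Y k d t y b :
  0 <= d <= t -> gap Y d t -> isBranch Y k b -> leG Y k b (mkG t y) ->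
  leG Y k b (mkG d y).
Proof.
  intros Hdt Hg Hb Hle. destruct (Rle_dec (gs b) d) as [Hbd|Hbd].
  - destruct Hle as [[Hb0 Vb] [_ [_ C]]]. simpl in *.
    apply leG_intro; simpl; [split; lra | exact Vb | eapply conn_gap; eauto].
  - exfalso. destruct Hle as [_ [_ [Hbt _]]]; simpl in Hbt.
    apply (no_branch_in_gap Y k b d); [auto|lra|lra|].
    intros u v Hu Hv Hd. apply Hg; auto. lra.
Qed.

Lemma nonbranch_witnesses Y k q s0 :
  validG Y k q -> ~ isBranch Y k q -> s0 < gs q ->
  (exists p, gs p < gs q /\ leG Y k p q) /\
  exists s, s0 <= s < gs q /\ forall x0 x1,
    leG Y k (mkG s x0) q -> leG Y k (mkG s x1) q -> eqG Y k (mkG s x0) (mkG s x1).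
Proof.
  intros Hq Hnb Hs0. split.
  - apply NNPP; intro Hn. apply Hnb. split; auto.
  - apply NNPP; intro Hn. apply Hnb. split; auto. left. exists s0. split; auto.
    intros s Hs. apply NNPP; intro Hn2. apply Hn. exists s. split; auto.
    intros x0 x1 H0 H1. apply NNPP; intro Hn3. apply Hn2. exists x0, x1. auto.
Qed.

Lemma descend_nonbranch Y k q d' :
  validG Y k q -> ~ isBranch Y k q -> 0 <= d' < gs q ->
  (forall s, s < gs q -> gap Y d' s) ->
  exists q', gs q' = d' /\ leG Y k q' q /\
    forall b, isBranch Y k b -> leG Y k b q -> leG Y k b q'.
Proof.
  intros Hq Hnb Hd' Hgap.
  destruct (nonbranch_witnesses Y k q d' Hq Hnb (proj2 Hd'))
    as [[p [Hplt [[Hp0 Hpv] [_ [_ Hpc]]]]] [s [Hs Hsingle]]].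
  assert (Hq'v : validG Y k (mkG d' (gx p)))
    by (split; simpl; [lra | eapply vert_gap; [apply Hgap|]; eauto]).
  exists (mkG d' (gx p)). split; [reflexivity|split].
  - apply leG_intro; simpl; [split; lra | apply Hq'v | exact Hpc].
  - intros b Hb Hbq.
    pose proof Hbq as [[Hb0 Hbv] [_ [_ Hbc]]].
    assert (Hblt : gs b < gs q).
    { destruct (Rle_lt_dec (gs q) (gs b)) as [Hge|]; auto. exfalso. apply Hnb.
      apply (eqG_branch Y k b); auto. split; [exact Hbq|].
      apply leG_intro; [split; [apply Hq|lra] | apply Hq |].
      apply conn_sym. eapply conn_gap; [apply gap_le|]; eauto. }
    assert (Hbd : gs b <= d').
    { destruct (Rle_dec (gs b) d') as [|Hgt]; auto. exfalso.
      apply (no_branch_in_gap Y k b d'); auto; lra. }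
    assert (Hlift : forall z r, r <= s -> vert Y r k z -> conn Y (gs q) k z (gx q) ->
                      leG Y k (mkG s z) q).
    { intros z r Hr Hz Hc. apply leG_intro; simpl; [split; lra | | exact Hc].
      eapply vert_gap; [apply gap_le|]; eauto. }
    assert (Hbs : leG Y k (mkG s (gx b)) q) by (apply (Hlift _ (gs b)); [lra | exact Hbv | exact Hbc]).
    assert (Hps : leG Y k (mkG s (gx p)) q) by (apply (Hlift _ d'); [lra | apply Hq'v | exact Hpc]).
    destruct (Hsingle _ _ Hbs Hps) as [[_ [_ [_ Hc]]] _]. simpl in Hc.
    apply leG_intro; simpl; [split; lra | exact Hbv |].
    apply (conn_gap Y k d' s); [apply Hgap; lra | exact Hc].
Qed.

Lemma maxBrBelow_transfer Y k p q b :
  leG Y k q p -> (forall b', isBranch Y k b' -> leG Y k b' p -> leG Y k b' q) ->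
  maxBrBelow Y k q b -> maxBrBelow Y k p b.
Proof.
  intros Hqp Hpq [Hb [Hbq Hmax]]. split; [auto|split].
  - eapply leG_trans; eauto.
  - intros b' Hb' Hle. apply Hmax; auto.
Qed.

Lemma maxBrBelow_self Y k q : isBranch Y k q -> maxBrBelow Y k q q.
Proof.
  intros Hq. split; [auto|split; auto].
  apply leG_intro; [split; [apply Hq|lra] | apply Hq | apply conn_refl, Hq].
Qed.

Lemma list_max (C : list R) (Q : R -> Prop) : (exists c, In c C /\ Q c) ->
  exists d, In d C /\ Q d /\ forall c, In c C -> Q c -> c <= d.
Proof.
  induction C as [|a C IH]; intros [c [Hc HQ]]; [destruct Hc|].
  destruct (classic (exists c, In c C /\ Q c)) as [He|Hn].
  - destruct (IH He) as [d [Hd [HQd Hm]]].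
    destruct (classic (Q a /\ d <= a)) as [[Ha Hda]|Ha].
    + exists a. split; [left; auto|split; auto]. intros c' [<-|Hc'] Hq; [lra|].
      specialize (Hm c' Hc' Hq); lra.
    + exists d. split; [right; auto|split; auto]. intros c' [<-|Hc'] Hq; [|auto].
      destruct (Rle_dec a d); auto. exfalso. apply Ha; split; auto; lra.
  - exists a. destruct Hc as [<-|Hc]; [|exfalso; apply Hn; eauto].
    split; [left; auto|split; auto]. intros c' [<-|Hc'] Hq; [lra|exfalso; apply Hn; eauto].
Qed.

(* Number of elements of C that are <= t; it strictly increases across an
   element of C, which provides the induction measure. *)
Definition count_below (C : list R) (t : R) : nat :=
  length (filter (fun c => if Rle_dec c t then true else false) C).

Lemma count_below_lt C a b d :
  a < d -> d <= b -> In d C -> (count_below C a < count_below C b)%nat.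
Proof.
  intros Had Hdb. unfold count_below.
  induction C as [|x C IH]; intros Hin; [destruct Hin|]. simpl.
  assert (Hle : (length (filter (fun c => if Rle_dec c a then true else false) C) <=
                 length (filter (fun c => if Rle_dec c b then true else false) C))%nat).
  { clear IH Hin. induction C as [|z C IHC]; simpl; [lia|].
    destruct (Rle_dec z a); destruct (Rle_dec z b); simpl; try lia. lra. }
  destruct Hin as [<-|Hin].
  - destruct (Rle_dec x a); [lra|]. destruct (Rle_dec x b); [|lra]. simpl; lia.
  - specialize (IH Hin). destruct (Rle_dec x a); destruct (Rle_dec x b); simpl; try lia. lra.
Qed.

Definition crit (Yl : list (list R)) : list R :=
  0 :: flat_map (fun a => map (Defs.dist a) Yl) Yl.

Lemma crit_gap (Y : list R -> Prop) Yl (HY : forall x, Y x <-> In x Yl) a b :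
  (forall c, In c (crit Yl) -> c <= b -> c <= a) -> gap Y a b.
Proof.
  intros Hc x y Hx Hy Hd. apply Hc; auto. right. apply in_flat_map.
  exists x. split; [apply HY; auto|]. apply in_map, HY; auto.
Qed.

Lemma exists_maxBrBelow Y k : finite_set Y ->
  forall p, validG Y k p -> exists b, maxBrBelow Y k p b.
Proof.
  intros [Yl HY].
  assert (H : forall N p, count_below (crit Yl) (gs p) = N -> validG Y k p ->
                exists b, maxBrBelow Y k p b); [|intros p; eauto].
  intros N; induction N as [N IH] using (well_founded_induction lt_wf).
  intros [t y] HN [Ht0 Hty]; simpl in *.
  destruct (list_max (crit Yl) (fun c => c <= t)) as [d [Hd [Hdt Hdm]]];
    [exists 0; split; [left|]; auto|].
  assert (Hd0 : 0 <= d) by (apply Hdm; [left|]; auto).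
  assert (Hgap : gap Y d t) by (apply (crit_gap Y Yl HY); auto).
  set (q := mkG d y).
  assert (Hqv : validG Y k q) by (split; simpl; auto; eapply vert_gap; eauto).
  enough (Hq : exists b, maxBrBelow Y k q b).
  { destruct Hq as [b Hb]. exists b. apply (maxBrBelow_transfer Y k _ q); auto.
    - apply leG_intro; simpl; [split; lra | apply Hqv | apply conn_refl; auto].
    - intros b' Hb' Hle. apply (branch_below_gap Y k d t); auto. }
  destruct (classic (isBranch Y k q)) as [Hqb|Hnb]; [exists q; apply maxBrBelow_self; auto|].
  assert (Hdpos : 0 < d).
  { destruct (Rle_lt_dec d 0); auto. exfalso. apply Hnb, level_zero_branch; auto. }
  destruct (list_max (crit Yl) (fun c => c < d)) as [d' [Hd' [Hd'd Hd'm]]];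
    [exists 0; split; [left|]; auto|].
  assert (Hd'0 : 0 <= d') by (apply Hd'm; [left|]; auto).
  destruct (descend_nonbranch Y k q d' Hqv Hnb) as [q' [Hlev [Hq'q Hq'max]]].
  { simpl; lra. }
  { intros s Hs. apply (crit_gap Y Yl HY). intros c Hc Hcs. apply Hd'm; auto. simpl in Hs; lra. }
  assert (Hcnt : (count_below (crit Yl) (gs q') < N)%nat)
    by (rewrite Hlev, <- HN; eapply count_below_lt; eauto).
  destruct (IH _ Hcnt q' eq_refl (proj1 Hq'q)) as [b Hb].
  exists b. apply (maxBrBelow_transfer Y k q q'); auto.
Qed.

Lemma istar_spec Y k p : finite_set Y -> validG Y k p -> maxBrBelow Y k p (istar Y k p).
Proof. intros HY Hp. unfold istar. apply epsilon_spec, exists_maxBrBelow; auto. Qed.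

Lemma istar_mono Y k p p' : finite_set Y -> leG Y k p p' ->
  leG Y k (istar Y k p) (istar Y k p').
Proof.
  intros HY Hpp'. pose proof Hpp' as [Hp [Hp' _]].
  destruct (istar_spec Y k p HY Hp) as [Hb [Hbp _]].
  destruct (istar_spec Y k p' HY Hp') as [_ [_ Hmax]].
  apply Hmax; auto. eapply leG_trans; eauto.
Qed.

Theorem mainTheorem15 (n : nat) (X Y : list R -> Prop) (k : nat)
  (hXY : forall x, X x -> Y x)
  (hYn : forall y, Y y -> length y = n)
  (hXfin : finite_set X) (hYfin : finite_set Y)
  (hXk : at_least (S k) X) :
  (forall a a', isBranch X k a -> isBranch X k a' -> leG X k a a' ->
     leG Y k (istar Y k a) (istar Y k a')) /\
  (forall a b j u, isBranch X k a -> isBranch X k b ->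
     isJoin X k a b j ->
     isJoin Y k (istar Y k a) (istar Y k b) u ->
     leG Y k u (istar Y k j)).
Proof.
  split.
  - intros a a' _ _ Hle. apply istar_mono, (leG_sub X); auto.
  - intros a b j u _ _ [Haj [Hbj _]] [_ [_ Hjoin]].
    apply Hjoin; apply istar_mono, (leG_sub X); auto.
Qed.
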